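(* Assume $\eta$ is supported on $\{\mathbf{x}\in E:|\mathbf{x}|_\infty\le R\}$ for some $R>0$. Let $\rho$ be a Borel probability measure on $\mathsf{X}$ and let $Y$ be a discrete-time Markov process on $\mathsf{X}$ with transition kernel $\mu$ and $Y_0\sim\rho$. Let $k_1,k_2$ be nonnegative integers. Then $|f_n(Y_{k_2})-f_n(Y_{k_1})|_\infty\le 2g(Y_0)+(k_1+k_2)R$ almost surely.
   Context: Fix $\theta_a,\theta_d>0$, positive integers $n,N$, $E=\mathbb{R}^N$ with the $\infty$-norm $|\cdot|_\infty$, and a Borel probability measure $\eta$ on $E$ with finite mean. $[k]=\{0,\dots,k-1\}$; $|\psi|=\sum_{i\in[n]}\psi(i)$. State space: $\mathsf{X}=\{(\psi,\mathbf{v})\in\{0,1\}^{[n]}\times E^{[n+1]}:\sum_{i\in[n]}\psi(i)(\mathbf{v}(i)-\mathbf{v}(n))=0\}$ (subspace of the product topology, discrete on $\{0,1\}$, Euclidean on $E$). For $i\in[n]$: $r_i(\psi)=\frac{\theta_d\psi(i)+\theta_a(1-\psi(i))}{\theta_d|\psi|+\theta_a(n-|\psi|)}$; $s_i(\psi)$ agrees with $\psi$ except $s_i(\psi)(i)=1-\psi(i)$. For $\mathsf{x}=(\psi,\mathbf{v})\in\mathsf{X}$, $\lambda_i^{\mathsf{x}}$ is the law of $(s_i(\psi),\mathbf{w})$ with $\mathbf{w}(j)=\mathbf{v}(j)$ for $j\in[n]\setminus\{i\}$ and $(\mathbf{w}(i),\mathbf{w}(n))$ equal to $(\mathbf{v}(i),\mathbf{v}(n))$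 if $|\psi|=\psi(i)=1$; $(\mathbf{v}(i),\mathbf{v}(n)-\frac{\mathbf{v}(i)-\mathbf{v}(n)}{|\psi|-1})$ if $|\psi|>\psi(i)=1$; $(\mathbf{x}+\mathbf{v}(n),\frac{\mathbf{x}}{|\psi|+1}+\mathbf{v}(n))$ with $\mathbf{x}\sim\eta$ if $\psi(i)=0$. $\mu(\mathsf{x},B)=\sum_{i\in[n]}r_i(\psi)\lambda_i^{\mathsf{x}}(B)$. $f_i(\psi,\mathbf{v})=\mathbf{v}(i)$ for $i\in[n+1]$, and $g(\mathsf{x})=\max\{|f_i(\mathsf{x})|_\infty:i\in[n+1]\}$. *)

From HB Require Import structures.
From mathcomp Require Import all_boot all_order all_algebra.
Import Order.TTheory GRing.Theory Num.Theory.
From mathcomp Require Import all_classical all_reals all_analysis.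
Import numFieldNormedType.Exports.

Set Implicit Arguments.
Unset Strict Implicit.
Unset Printing Implicit Defensive.

Local Open Scope classical_set_scope.
Local Open Scope ring_scope.

(* E = R^N as row vectors; the matrix norm of mathcomp-analysis on 'rV_N is
   the max-norm |.|_oo.  Borel sigma-algebra on E. *)
Definition Espace (R : realType) (N : nat) :=
  g_sigma_algebraType (@open 'rV[R]_N).

(* Ambient space {0,1}^[n] x E^[n+1] with the product topology
   (discrete on bool, Euclidean on E), and its Borel sigma-algebra.
   psi : 'I_n -> bool, v : 'I_n.+1 -> 'rV_N, v(n) = v ord_max. *)
Definition Amb (R : realType) (n N : nat) :=
  ({ptws 'I_n -> bool} * {ptws 'I_n.+1 -> 'rV[R]_N})%type.
Definition State (R : realType) (n N : nat) :=
  g_sigma_algebraType (@open (Amb R n N)).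

Definition card_psi (n : nat) (psi : 'I_n -> bool) : nat :=
  (\sum_(i < n) psi i)%N.

Definition idx (n : nat) (i : 'I_n) : 'I_n.+1 := widen_ord (leqnSn n) i.

Definition Xset (R : realType) (n N : nat) : set (State R n N) :=
  [set x : State R n N | \sum_(i < n) (((x.1 i : bool) : nat)%:R : R) *: (x.2 (idx i) - x.2 ord_max) = 0].

Definition rate (R : realType) (n : nat) (thd tha : R) (psi : 'I_n -> bool)
    (i : 'I_n) : R :=
  (thd * (psi i)%:R + tha * (1 - (psi i)%:R)) /
  (thd * (card_psi psi)%:R + tha * (n - card_psi psi)%:R).

Definition flip (n : nat) (psi : 'I_n -> bool) (i : 'I_n) : 'I_n -> bool :=
  fun j => if j == i then ~~ psi i else psi j.

(* the vector w of the definition of lambda_i^x; e is the sample x ~ eta,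
   used only in the case psi(i) = 0 *)
Definition neww (R : realType) (n N : nat) (psi : 'I_n -> bool)
    (v : 'I_n.+1 -> 'rV[R]_N) (i : 'I_n) (e : 'rV[R]_N) : 'I_n.+1 -> 'rV[R]_N :=
  fun j =>
    if j == idx i then
      (if psi i then v (idx i) else e + v ord_max)
    else if j == ord_max then
      (if psi i then
         (if card_psi psi == 1%N then v ord_max
          else v ord_max - ((card_psi psi)%:R - 1)^-1 *: (v (idx i) - v ord_max))
       else ((card_psi psi)%:R + 1)^-1 *: e + v ord_max)
    else v j.

Definition lam (R : realType) (n N : nat) (eta : probability (Espace R N) R)
    (x : State R n N) (i : 'I_n) (B : set (State R n N)) : \bar R :=
  if x.1 i then
    \d_((flip x.1 i, neww x.1 x.2 i 0) : State R n N) B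
  else
    eta [set e : Espace R N | B (flip x.1 i, neww x.1 x.2 i e)].

Definition mu (R : realType) (n N : nat) (thd tha : R)
    (eta : probability (Espace R N) R) (x : State R n N)
    (B : set (State R n N)) : \bar R :=
  (\sum_(i < n) (rate thd tha x.1 i)%:E * lam eta x i B)%E.

Definition fcoord (R : realType) (n N : nat) (i : 'I_n.+1) (x : State R n N)
  : 'rV[R]_N := x.2 i.
Definition gmax (R : realType) (n N : nat) (x : State R n N) : R :=
  \big[Num.max/0]_(i < n.+1) `|x.2 i|.

(* Y is a discrete-time Markov process (w.r.t. its natural filtration) with
   transition kernel K: for all k and Borel sets A_0, ..., A_{k+1},
   P(Y_0 in A_0, ..., Y_{k+1} in A_{k+1})
     = E[ 1{Y_0 in A_0, ..., Y_k in A_k} K(Y_k, A_{k+1}) ]. *)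
Definition markov_with_kernel (R : realType) (d : measure_display)
    (Omega : measurableType d) (P : probability Omega R)
    (d' : measure_display) (S : measurableType d')
    (K : S -> set S -> \bar R) (Y : nat -> Omega -> S) : Prop :=
  (forall k, measurable_fun setT (Y k)) /\
  forall (k : nat) (A : nat -> set S), (forall j, measurable (A j)) ->
    P (\bigcap_(j in `I_k.+2) (Y j @^-1` A j)) =
    (\int[P]_(w in \bigcap_(j in `I_k.+1) (Y j @^-1` A j)) K (Y k w) (A k.+1))%E.

(* Let X_c be the set of states of X all of whose coordinates have norm at most
   c.  A transition from X_c stays in X, changes v(i) into v(i) or x + v(n), and
   moves v(n) either to v(n) + x / (|psi| + 1) or to the mean of the coordinates
   that remain active (membership in X says that v(n) is that mean).  Since
   |x| <= R, it therefore lands in X_(c+R) almost surely, and the Markov property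
   propagates Y_0 in X_c to Y_k in X_(c+kR) almost surely.  Applying this to the
   countably many rational c >= g(Y_0) bounds |v(n)| along the path by
   g(Y_0) + kR, and the triangle inequality concludes. *)

From HB Require Import structures.
From mathcomp Require Import all_boot all_order all_algebra.
Import Order.TTheory GRing.Theory Num.Theory.
From mathcomp Require Import all_classical all_reals all_analysis.
Import numFieldNormedType.Exports.
From mathcomp Require Import lra.

Set Implicit Arguments.
Unset Strict Implicit.
Unset Printing Implicit Defensive.

Local Open Scope classical_set_scope.
Local Open Scope ring_scope.

Lemma continuous_discrete (X : discreteTopologicalType) (T : topologicalType)
  (f : X -> T) : continuous f.
Proof. by apply/continuousP => A _; exact: discrete_open. Qed.

Lemma g_sigma_measurable_compl (T : pointedType) (G : set (set T)) (A : set T) :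
  G (~` A) -> measurable (A : set (g_sigma_algebraType G)).
Proof. by move=> GAC; rewrite -[A]setCK; apply: measurableC; exact: sub_sigma_algebra. Qed.

Lemma ae_notin_null d (T : measurableType d) (R : realType) (mu : measure T R)
  (A : set T) : measurable A -> mu A = 0%E -> {ae mu, forall x, ~ A x}.
Proof.
by move=> mA A0; apply: negligibleS (proj2 (negligibleP _ mA) A0) => x /contrapT.
Qed.

Lemma ae_in_prob1 d (T : measurableType d) (R : realType) (P : probability T R)
  (A : set T) : measurable A -> P A = 1%E -> {ae P, forall x, A x}.
Proof.
move=> mA PA; have PAC : P (~` A) = 0%E by rewrite probability_setC // PA subee.
by apply: filterS (ae_notin_null (measurableC mA) PAC) => x /contrapT.
Qed.

Section markov_invariance.
Context {d : measure_display} {Omega : measurableType d} {R : realType}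
  (P : probability Omega R) {d' : measure_display} {S : measurableType d'}
  (K : S -> set S -> \bar R) (Y : nat -> Omega -> S).
Hypothesis hY : markov_with_kernel P K Y.
Variable A : nat -> set S.
Hypothesis mA : forall j, measurable (A j).
Hypothesis K_keeps_A : forall k x, A k x -> K x (~` A k.+1) = 0%E.

Let path_in k := \bigcap_(j in `I_k.+1) (Y j @^-1` A j).

Let measurable_preimage j (B : set S) : measurable B -> measurable (Y j @^-1` B).
Proof. by move=> mB; rewrite -[_ @^-1` _]setTI; exact: hY.1 j measurableT B mB. Qed.

Let measurable_exit k : measurable (path_in k `&` Y k.+1 @^-1` (~` A k.+1)).
Proof.
apply: measurableI; last exact/measurable_preimage/measurableC.
by apply: bigcap_measurableType => j _; exact: measurable_preimage.
Qed.

Lemma markov_exit_null k : P (path_in k `&` Y k.+1 @^-1` (~` A k.+1)) = 0%E.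
Proof.
(* the Markov property for the path sets with the last one complemented *)
pose A' j := if j == k.+1 then ~` A k.+1 else A j.
have mA' j : measurable (A' j) by rewrite /A'; case: ifP => _; [exact: measurableC|].
have -> : path_in k `&` Y k.+1 @^-1` (~` A k.+1) = \bigcap_(j in `I_k.+2) (Y j @^-1` A' j).
  apply/seteqP; split => [w [inA outA] j /=|w inA'].
    rewrite ltnS leq_eqVlt /A' => /orP[/eqP->|jk]; first by rewrite eqxx.
    by rewrite (ltn_eqF jk); exact: inA.
  split; last by have := inA' k.+1 (ltnSn _); rewrite /A' eqxx.
  by move=> j /= jk; have := inA' j (ltnW jk); rewrite /A' (ltn_eqF jk).
rewrite (hY.2 k A' mA'); apply: integral0_eq => w inA'.
rewrite /A' eqxx; apply: K_keeps_A.
by have := inA' k (ltnSn _); rewrite /A' (ltn_eqF (ltnSn k)).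
Qed.

Lemma markov_ae_invariant k : {ae P, forall w, A 0 (Y 0 w) -> A k (Y k w)}.
Proof.
suff : {ae P, forall w, A 0 (Y 0 w) -> path_in k w}.
  by apply: filterS => w inA /inA; apply => /=.
elim: k => [|k IH].
  by apply: aeW => w A0 j /=; rewrite ltnS leqn0 => /eqP ->.
apply: filterS2 IH (ae_notin_null (measurable_exit k) (markov_exit_null k)).
move=> w inA noexit A0 j /=; rewrite ltnS leq_eqVlt => /orP[/eqP->|jk].
  by apply: contrapT => outA; apply: noexit; split => //; exact: inA.
exact: inA A0 j jk.
Qed.

End markov_invariance.

Definition Xbounded {R : realType} {n N : nat} (c : R) : set (State R n N) :=
  [set x | Xset x /\ forall j, `|x.2 j| <= c].

Section state_space.
Variables (R : realType) (n N : nat).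
Implicit Types (psi : 'I_n -> bool) (v : 'I_n.+1 -> 'rV[R]_N) (x : State R n N).

Lemma sum_active_sub psi v :
  \sum_(i < n) ((psi i : nat)%:R : R) *: (v (idx i) - v ord_max) =
  \sum_(i < n) ((psi i : nat)%:R : R) *: v (idx i) - (card_psi psi)%:R *: v ord_max.
Proof.
by rewrite /card_psi natr_sum scaler_suml -sumrB; apply: eq_bigr => i _; rewrite scalerBr.
Qed.

Lemma XsetE x : Xset x <->
  \sum_(i < n) ((x.1 i : nat)%:R : R) *: x.2 (idx i) = (card_psi x.1)%:R *: x.2 ord_max.
Proof.
rewrite /Xset /mkset sum_active_sub.
by split => [/eqP|->]; [rewrite subr_eq0 => /eqP | rewrite subrr].
Qed.

Lemma card_flip psi (i : 'I_n) :
  (card_psi (flip psi i) + psi i = card_psi psi + ~~ psi i)%N.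
Proof.
rewrite /card_psi (bigD1 i) // [in RHS](bigD1 i) // /flip eqxx.
rewrite (eq_bigr (fun j => psi j : nat)) => [|j /negbTE ->] //.
by rewrite addnAC [RHS]addnAC [(~~ _ + _)%N]addnC.
Qed.

Lemma card_psi_rest psi (i : 'I_n) :
  card_psi psi = (psi i + \sum_(j < n | j != i) psi j)%N.
Proof. by rewrite /card_psi (bigD1 i). Qed.

Lemma idx_neq_max (i : 'I_n) : (idx i == ord_max) = false.
Proof. by rewrite -val_eqE; exact: ltn_eqF (ltn_ord i). Qed.

Lemma neww_idx psi v (i j : 'I_n) e : neww psi v i e (idx j) =
  if j == i then (if psi i then v (idx i) else e + v ord_max) else v (idx j).
Proof. by rewrite /neww idx_neq_max (_ : (idx j == idx i) = (j == i)) // -val_eqE. Qed.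

Lemma neww_max psi v (i : 'I_n) e : neww psi v i e ord_max =
  if psi i then
    (if card_psi psi == 1%N then v ord_max
     else v ord_max - ((card_psi psi)%:R - 1)^-1 *: (v (idx i) - v ord_max))
  else ((card_psi psi)%:R + 1)^-1 *: e + v ord_max.
Proof. by rewrite /neww eq_sym idx_neq_max eqxx. Qed.

Lemma Xset_neww x (i : 'I_n) e :
  Xset x -> Xset ((flip x.1 i, neww x.1 x.2 i e) : State R n N).
Proof.
case: x => psi v; rewrite !XsetE /=.
set m := v ord_max; set vi := v (idx i).
set rest := \sum_(j < n | j != i) ((psi j : nat)%:R : R) *: v (idx j).
have -> : \sum_(j < n) ((flip psi i j : nat)%:R : R) *: neww psi v i e (idx j) =
    ((~~ psi i : nat)%:R : R) *: neww psi v i e (idx i) + rest.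
  rewrite (bigD1 i) //= /flip eqxx; congr (_ + _); apply: eq_bigr => j ji.
  by rewrite (negbTE ji) neww_idx (negbTE ji).
rewrite (bigD1 i) //= -/rest neww_idx eqxx neww_max -/m -/vi.
have := card_flip psi i; have := card_psi_rest psi i.
case: (psi i) => /= rest_card; rewrite ?addn0 ?addn1 => card_eq Xv.
- rewrite -card_eq in rest_card Xv *; rewrite scale0r add0r scale1r in Xv *.
  case: (card_psi (flip psi i)) rest_card Xv => [|k] rest_card Xv /=.
    move: rest_card; rewrite add1n => /succn_inj/esym/eqP.
    rewrite sum_nat_eq0 => /forallP inactive; rewrite scale0r /rest big1 // => j ji.
    by have := inactive j; rewrite ji /= => /eqP ->; rewrite scale0r.
  move: Xv; rewrite -[k.+2]addn1 natrD addrK scalerDl scale1r => Xv.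
  rewrite scalerBr scalerA mulfV ?pnatr_eq0 // scale1r.
  by apply: (addrI vi); rewrite Xv opprB addrCA subrKC.
- rewrite scale0r add0r in Xv; rewrite card_eq Xv scale1r -natr1 scalerDr scalerA.
  rewrite mulfV ?scale1r; last by rewrite natr1 pnatr_eq0.
  by rewrite scalerDl scale1r -addrA (addrC m).
Qed.

Lemma Xset_norm_max_le x (c : R) : Xset x -> (0 < card_psi x.1)%N ->
  (forall i, x.1 i -> `|x.2 (idx i)| <= c) -> `|x.2 ord_max| <= c.
Proof.
move=> /XsetE Xx card_gt0 active_le.
have K_gt0 : 0 < (card_psi x.1)%:R :> R by rewrite ltr0n.
suff : `|(card_psi x.1)%:R *: x.2 ord_max| <= (card_psi x.1)%:R * c.
  by rewrite normrZ gtr0_norm // ler_pM2l.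
rewrite -Xx /card_psi natr_sum mulr_suml.
apply: le_trans (ler_norm_sum _ _ _) _; apply: ler_sum => i _.
rewrite normrZ ger0_norm ?ler0n //.
by case: (x.1 i) (active_le i) => /= [/(_ isT) le_c|_]; rewrite ?mul1r ?mul0r.
Qed.

Lemma Xbounded_neww x (i : 'I_n) e (c Rad : R) :
  0 <= Rad -> Xbounded c x -> (~~ x.1 i -> `|e| <= Rad) ->
  Xbounded (c + Rad) ((flip x.1 i, neww x.1 x.2 i e) : State R n N).
Proof.
move=> Rad_ge0 [Xx x_le] e_le; have c_le : c <= c + Rad by rewrite lerDl.
have idx_le j : `|neww x.1 x.2 i e (idx j)| <= c + Rad.
  rewrite neww_idx; case: eqP => _; last exact: le_trans (x_le _) c_le.
  case: ifPn e_le => [_ _|_ /(_ isT) e_le]; first exact: le_trans (x_le _) c_le.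
  by apply: le_trans (ler_normD _ _) _; rewrite addrC lerD.
split; first exact: Xset_neww.
move=> j; have [jn|nj] := ltnP j n.
  have -> : j = idx (Ordinal jn) by exact: val_inj.
  exact: idx_le.
have -> : j = ord_max by apply/val_inj/eqP; rewrite eqn_leq nj andbT -ltnS ltn_ord.
have [flip0|] := posnP (card_psi (flip x.1 i)); last first.
  move=> flip_gt0; apply: Xset_norm_max_le (Xset_neww _ _ Xx) flip_gt0 _ => j' _.
  exact: idx_le.
(* no active coordinate is left only when the last one is deactivated;
   then v(n) stays put *)
have := card_flip x.1 i; rewrite flip0 /= neww_max.
case: (x.1 i) => /= card1; last by rewrite addn1 in card1.
by rewrite addn0 in card1; rewrite -card1; exact: le_trans (x_le _) c_le.
Qed.

Lemma continuous_value (j : 'I_n.+1) : continuous (fun x : Amb R n N => x.2 j).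
Proof.
move=> x; apply: (@continuous_comp _ _ _ snd (fun v : {ptws 'I_n.+1 -> 'rV[R]_N} => v j)).
  exact: cvg_snd.
exact: proj_continuous.
Qed.

Lemma continuous_active (i : 'I_n) :
  continuous (fun x : Amb R n N => ((x.1 i : nat)%:R : R)).
Proof.
move=> x; apply: (@continuous_comp _ _ _ (fun x : Amb R n N => x.1 i)
  (fun b : bool => ((b : nat)%:R : R))).
  apply: (@continuous_comp _ _ _ fst (fun psi : {ptws 'I_n -> bool} => psi i)).
    exact: cvg_fst.
  exact: proj_continuous.
exact: continuous_discrete.
Qed.

Lemma closed_Xset : closed (@Xset R n N : set (Amb R n N)).
Proof.
pose F (x : Amb R n N) :=
  \sum_(i < n) ((x.1 i : nat)%:R : R) *: (x.2 (idx i) - x.2 ord_max).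
have cF : continuous F.
  rewrite /F -(fct_sumE _ _ (fun i (x : Amb R n N) =>
    ((x.1 i : nat)%:R : R) *: (x.2 (idx i) - x.2 ord_max))).
  apply: (big_ind (fun f : Amb R n N -> 'rV[R]_N => continuous f)).
  - by move=> x; exact: cvg_cst.
  - by move=> f g cf cg x; exact: (@continuousD _ _ _ f g x (cf x) (cg x)).
  move=> i _ x; apply: (@continuousZ _ _ _ (fun x : Amb R n N => ((x.1 i : nat)%:R : R))
    (fun x : Amb R n N => x.2 (idx i) - x.2 ord_max)); first exact: continuous_active.
  by apply: continuousB; exact: continuous_value.
have -> : (@Xset R n N : set (Amb R n N)) = F @^-1` [set 0] by [].
apply: (proj1 (continuous_closedP _) cF).
exact: (@accessible_closed_set1 _ (hausdorff_accessible (@norm_hausdorff R 'rV[R]_N)) 0).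
Qed.

Lemma closed_Xbounded (c : R) : closed (Xbounded c : set (Amb R n N)).
Proof.
have -> : (Xbounded c : set (Amb R n N)) =
    @Xset R n N `&` \bigcap_(j in [set: 'I_n.+1])
      ((fun x : Amb R n N => `|x.2 j|) @^-1` [set r | r <= c]).
  by apply/seteqP; split => x [Xx bx]; split => // j *; exact: bx.
apply: closedI; first exact: closed_Xset.
apply: closed_bigI => j _; apply: (proj1 (continuous_closedP _)) (@closed_le R c).
move=> x; apply: (@continuous_comp _ _ _ _ (Num.norm : 'rV[R]_N -> R)).
  exact: continuous_value.
exact: norm_continuous.
Qed.

Lemma neww_affine psi v (i : 'I_n) (t : 'I_n.+1) :
  exists (s : R) (a : 'rV[R]_N), forall e, neww psi v i e t = s *: e + a.
Proof.
rewrite /neww; case: eqP => _.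
  by case: (psi i); [exists 0, (v (idx i)) | exists 1, (v ord_max)] => e;
    rewrite ?scale0r ?add0r ?scale1r.
case: eqP => _; last by exists 0, (v t) => e; rewrite scale0r add0r.
case: (psi i); last by exists ((card_psi psi)%:R + 1)^-1, (v ord_max).
by eexists 0, _ => e; rewrite scale0r add0r.
Qed.

Lemma continuous_neww psi v (i : 'I_n) :
  continuous (fun e : 'rV[R]_N => ((flip psi i, neww psi v i e) : Amb R n N)).
Proof.
move=> e; apply: (@cvg_pair _ _ _ (nbhs e) (nbhs (flip psi i : {ptws _ -> bool}))
  (nbhs (neww psi v i e : {ptws _ -> _})) _ _ _ (fun=> flip psi i) (neww psi v i)).
  exact: cvg_cst.
apply/(@pointwise_cvgP (discrete_topology 'I_n.+1)) => t.
change ((fun e => neww psi v i e t) @ e --> neww psi v i e t).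
have [s [a sa]] := neww_affine psi v i t.
have -> : (fun e => neww psi v i e t) = (fun e => s *: e + a) by exact: funext.
rewrite sa; apply: (@continuousD _ _ _ (fun e => s *: e) (fun=> a)).
  exact: scaler_continuous.
exact: cst_continuous.
Qed.

Lemma mu_Xbounded_compl (thd tha c Rad : R) (eta : probability (Espace R N) R) x :
  0 <= Rad -> {ae eta, forall e, `|e| <= Rad} -> Xbounded c x ->
  mu thd tha eta x (~` Xbounded (c + Rad)) = 0%E.
Proof.
move=> Rad_ge0 eta_ball bx; rewrite /mu big1 // => i _; rewrite /lam.
case: ifP => _.
  rewrite diracE memNset ?mule0 // => /=; apply.
  by apply: Xbounded_neww => //; rewrite normr0.
set B := [set e : Espace R N | _].
have mB : measurable B.
  apply: sub_sigma_algebra; rewrite /B.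
  have := proj1 (continuousP _) (@continuous_neww x.1 x.2 i)
    (~` (Xbounded (c + Rad) : set (Amb R n N))).
  by apply; exact/closed_openC/closed_Xbounded.
rewrite (proj1 (negligibleP _ mB)) ?mule0 //; apply: negligibleS eta_ball => e /= outB le_Rad.
by apply: outB; apply: Xbounded_neww.
Qed.

Lemma measurable_Xset : measurable (@Xset R n N).
Proof. by apply: g_sigma_measurable_compl; exact/closed_openC/closed_Xset. Qed.

Lemma measurable_Xbounded (c : R) : measurable (Xbounded c : set (State R n N)).
Proof. by apply: g_sigma_measurable_compl; exact/closed_openC/closed_Xbounded. Qed.

Lemma measurable_norm_le (r : R) : measurable [set e : Espace R N | `|e| <= r].
Proof.
apply: g_sigma_measurable_compl; apply: closed_openC.
have norm_cont : continuous (Num.norm : 'rV[R]_N -> R) := @norm_continuous _ _.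
exact: (proj1 (continuous_closedP _) norm_cont _ (@closed_le R r)).
Qed.

Lemma gmax_ge0 x : 0 <= gmax x.
Proof. by rewrite /gmax; elim/big_ind: _ => // a b ha hb; rewrite le_max ha. Qed.

Lemma le_gmax x j : `|x.2 j| <= gmax x.
Proof. by rewrite /gmax (bigD1 j) //= le_max lexx. Qed.

End state_space.

Lemma le_of_frac_upper_bounds (R : realType) (x g : R) : 0 <= g ->
  (forall m p : nat, g <= p%:R / m.+1%:R -> x <= p%:R / m.+1%:R) -> x <= g.
Proof.
move=> g_ge0 frac_le; apply/ler_addgt0Pr => eps eps_gt0.
pose M : R := (Num.truncn eps^-1).+1%:R.
have M_gt0 : 0 < M by rewrite ltr0n.
have eps_M : 1 < eps * M.
  by rewrite -(mulfV (lt0r_neq0 eps_gt0)) ltr_pM2l // truncnS_gt.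
pose p := (Num.truncn (g * M)).+1.
have p_le : p%:R <= g * M + 1.
  by rewrite -natr1 lerD2r truncn_le mulr_ge0 // ltW.
apply: le_trans (frac_le _ p _) _; first by rewrite ler_pdivlMr //; exact/ltW/truncnS_gt.
rewrite -/M ler_pdivrMr // mulrDl; apply: le_trans p_le _; rewrite lerD2l; exact: ltW.
Qed.

Lemma Xbounded_frac_gmax (R : realType) (n N : nat) (x y : State R n N) (t : R)
  (j : 'I_n.+1) : Xset x ->
  (forall m p : nat, Xbounded (p%:R / m.+1%:R) x -> Xbounded (p%:R / m.+1%:R + t) y) ->
  `|y.2 j| <= gmax x + t.
Proof.
move=> Xx xy; rewrite -lerBlDr; apply: le_of_frac_upper_bounds (gmax_ge0 _) _ => m p g_le.
have [_ y_le] : Xbounded (p%:R / m.+1%:R + t) y.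
  by apply: xy; split => // i; exact: le_trans (le_gmax _ i) g_le.
by rewrite lerBlDr.
Qed.

Lemma Xbounded_ae_invariant (R : realType) (n N : nat) (thd tha Rad c : R)
  (eta : probability (Espace R N) R) (d : measure_display) (Omega : measurableType d)
  (P : probability Omega R) (Y : nat -> Omega -> State R n N) :
  0 <= Rad -> {ae eta, forall e, `|e| <= Rad} ->
  markov_with_kernel P (mu thd tha eta) Y ->
  forall k, {ae P, forall w, Xbounded c (Y 0%N w) -> Xbounded (c + k%:R * Rad) (Y k w)}.
Proof.
move=> Rad_ge0 eta_ball hY k.
pose A j : set (State R n N) := Xbounded (c + j%:R * Rad).
have mA j : measurable (A j) by exact: measurable_Xbounded.
have K_keeps_A j x : A j x -> mu thd tha eta x (~` A j.+1) = 0%E.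
  by rewrite /A -natr1 mulrDl mul1r addrA; exact: mu_Xbounded_compl.
apply: filterS (markov_ae_invariant hY mA K_keeps_A k) => w.
by rewrite /A mul0r addr0.
Qed.

Theorem lemma4 (R : realType) (n N : nat) (hn : (0 < n)%N) (hN : (0 < N)%N)
  (tha thd : R) (htha : 0 < tha) (hthd : 0 < thd)
  (eta : probability (Espace R N) R)
  (eta_mean : eta.-integrable setT (fun e : Espace R N => (`|e| : R)%:E))
  (Rad : R) (hRad : 0 < Rad)
  (eta_supp : eta [set e : Espace R N | `|e| <= Rad] = 1%E)
  (rho : probability (State R n N) R) (rho_X : rho (@Xset R n N) = 1%E)
  (d : measure_display) (Omega : measurableType d) (P : probability Omega R)
  (Y : nat -> Omega -> State R n N)
  (hY : markov_with_kernel P (mu thd tha eta) Y)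
  (hY0 : forall A : set (State R n N), measurable A ->
           P (Y 0%N @^-1` A) = rho A)
  (k1 k2 : nat) :
  {ae P, forall w, `|fcoord ord_max (Y k2 w) - fcoord ord_max (Y k1 w)|
                   <= 2 * gmax (Y 0%N w) + (k1 + k2)%:R * Rad}.
Proof.
have X0 : {ae P, forall w, Xset (Y 0%N w)}.
  apply: ae_in_prob1; last by rewrite hY0 //; exact: measurable_Xset.
  by have := hY.1 0%N measurableT _ (@measurable_Xset R n N); rewrite setTI.
have eta_ball := ae_in_prob1 (@measurable_norm_le R N Rad) eta_supp.
(* ae_foralln needs a countable family of thresholds: the fractions p / (m + 1) *)
pose stays_bounded k m p w := Xbounded (p%:R / m.+1%:R : R) (Y 0%N w) ->
  Xbounded (p%:R / m.+1%:R + k%:R * Rad) (Y k w).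
have invariant k : {ae P, forall w m p, stays_bounded k m p w}.
  apply: (ae_foralln (P := fun m w => forall p, stays_bounded k m p w)) => m.
  apply: (ae_foralln (P := stays_bounded k m)) => p.
  exact: Xbounded_ae_invariant (ltW hRad) eta_ball hY k.
apply: filterS3 X0 (invariant k1) (invariant k2) => w X0w inv1 inv2.
have := Xbounded_frac_gmax ord_max X0w inv1; have := Xbounded_frac_gmax ord_max X0w inv2.
have := ler_normB (fcoord ord_max (Y k2 w)) (fcoord ord_max (Y k1 w)).
rewrite /fcoord natrD mulrDl; lra.
Qed.
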